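(* Let $B$ be any Boolean algebra, considered as a Boolean metric space with $d(x,y)=x\triangle y$. If $U,V\subset B$ and $f:U\to V$ is an isometry, then there exists $a\in B$ such that the map $F:B\to B$, $F(x)=a\triangle x$, is an isometry of $B$ extending $f$.
   Context: An isometry between Boolean metric spaces is a bijection $f$ with $d(f(x),f(y))=d(x,y)$ for all $x,y$. $\triangle$ is symmetric difference in $B$. *)

(* A Boolean algebra is a ctbDistrLatticeType
   (complemented distributive lattice with top and bottom). *)
From HB Require Import structures.
From mathcomp Require Import all_boot all_order.
Set Implicit Arguments. Unset Strict Implicit. Unset Printing Implicit Defensive.
Import Order.TTheory.
Local Open Scope order_scope.

Definition symdiff {disp : Order.disp_t} {B : ctbDistrLatticeType disp} (x y : B) : B :=
  (x `\` y) `|` (y `\` x).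

Definition isometry {T1 T2 M : Type} (d1 : T1 -> T1 -> M) (d2 : T2 -> T2 -> M)
  (f : T1 -> T2) : Prop :=
  bijective f /\ forall x y, d2 (f x) (f y) = d1 x y.

(* In a Boolean algebra B, symmetric difference x △ y makes B an abelian group
   of exponent two with neutral element \bot: △ is commutative, associative,
   and every element is its own inverse.  Two consequences give the theorem.
   - Every translation x |-> a △ x is an isometry of (B, △): it is its own
     inverse, and (a △ x) △ (a △ y) = x △ y.
   - If g preserves distances from a fixed base point u, i.e.
     g x △ g u = x △ u, then g x = a △ x with a := g u △ u.
   Given an isometry f : U -> V, either U is empty (any translation, e.g. by
   \bot, extends f vacuously) or we pick u in U and take a := f u △ u.
   Associativity, the only non-trivial group law, is proved by bringing both
   sides to the disjunctive normal form of the ternary "odd parity" term. *)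

From HB Require Import structures.
From mathcomp Require Import all_boot all_order.
From Stdlib Require Import Classical.
Import Order.Theory.
Local Open Scope order_scope.

Section SymmetricDifference.
Context {disp : Order.disp_t} {B : ctbDistrLatticeType disp}.
Implicit Types a x y z : B.

Definition odd_parity x y z : B :=
  (x `&` ~` y `&` ~` z) `|` (~` x `&` y `&` ~` z) `|`
  (~` x `&` ~` y `&` z) `|` (x `&` y `&` z).

Lemma compl_symdiff x y : ~` symdiff x y = (~` x `&` ~` y) `|` (x `&` y).
Proof.
rewrite /symdiff !diffE complU !complI !complK !meetUl !meetUr.
by rewrite meetCx meetxC joinx0 join0x (meetC y x).
Qed.

Lemma symdiffC x y : symdiff x y = symdiff y x.
Proof. by rewrite /symdiff joinC. Qed.

Lemma symdiff2_odd_parity x y z : symdiff (symdiff x y) z = odd_parity x y z.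
Proof.
rewrite {1}/symdiff !diffE compl_symdiff /symdiff !diffE !meetUl !meetUr.
rewrite /odd_parity !meetA (meetC y (~` x)).
rewrite -[z `&` ~` x `&` ~` y]meetA [z `&` (_ `&` _)]meetC.
rewrite -[z `&` x `&` y]meetA [z `&` (x `&` y)]meetC.
by rewrite !joinA.
Qed.

Lemma odd_parity_rot x y z : odd_parity x y z = odd_parity y z x.
Proof.
rewrite /odd_parity [y `&` ~` z `&` ~` x]meetC [~` y `&` z `&` ~` x]meetC.
rewrite [~` y `&` ~` z `&` x]meetC [y `&` z `&` x]meetC !meetA.
by congr (_ `|` _); rewrite [RHS]joinC joinA.
Qed.

Lemma symdiffA x y z : symdiff (symdiff x y) z = symdiff x (symdiff y z).
Proof.
by rewrite (symdiffC x (symdiff y z)) !symdiff2_odd_parity odd_parity_rot.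
Qed.

Lemma symdiffxx x : symdiff x x = \bot.
Proof. by rewrite /symdiff diffxx joinx0. Qed.

Lemma symdiff0x x : symdiff \bot x = x.
Proof. by rewrite /symdiff diff0x diffx0 join0x. Qed.

Lemma symdiffK a x : symdiff a (symdiff a x) = x.
Proof. by rewrite -symdiffA symdiffxx symdiff0x. Qed.

Lemma symdiff_translate a x y :
  symdiff (symdiff a x) (symdiff a y) = symdiff x y.
Proof. by rewrite symdiffA -(symdiffA x a y) (symdiffC x a) symdiffA symdiffK. Qed.

Lemma translation_isometry a : isometry symdiff symdiff (symdiff a).
Proof.
split; last exact: symdiff_translate.
by exists (symdiff a) => x; apply: symdiffK.
Qed.

Lemma based_isometry_translation {T : Type} (g h : T -> B) (u : T) :
  (forall t, symdiff (g t) (g u) = symdiff (h t) (h u)) ->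
  forall t, g t = symdiff (symdiff (g u) (h u)) (h t).
Proof.
move=> dist_u t.
have -> : g t = symdiff (symdiff (g t) (g u)) (g u).
  by rewrite symdiffA symdiffxx symdiffC symdiff0x.
by rewrite dist_u symdiffA symdiffC (symdiffC (h u)).
Qed.

End SymmetricDifference.

Theorem mainTheorem14 (disp : Order.disp_t) (B : ctbDistrLatticeType disp)
  (U V : B -> Prop) (f : {x : B | U x} -> {y : B | V y}) :
  isometry (fun x y : {x : B | U x} => symdiff (proj1_sig x) (proj1_sig y))
           (fun x y : {y : B | V y} => symdiff (proj1_sig x) (proj1_sig y)) f ->
  exists a : B,
    isometry (@symdiff disp B) (@symdiff disp B) (fun x : B => symdiff a x) /\
    forall x : {x : B | U x}, proj1_sig (f x) = symdiff a (proj1_sig x).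
Proof.
move=> [_ f_dist].
have [[u _] | U_empty] := classic (exists u : {x : B | U x}, True).
- exists (symdiff (proj1_sig (f u)) (proj1_sig u)).
  split; first exact: translation_isometry.
  exact: (based_isometry_translation (fun x => proj1_sig (f x)) _ u (f_dist^~ u)).
- exists \bot; split; first exact: translation_isometry.
  by move=> x; case: U_empty; exists x.
Qed.
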